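(* Let $R$ be a commutative Noetherian ring, $\mathfrak{a}$ an ideal of $R$, $M$ an $R$-module, and $\mathcal{S}$ a Serre subcategory of the category of $R$-modules and $R$-homomorphisms. Then $\mathfrak{a}M\in\mathcal{S}$ if and only if $M/(0:_M\mathfrak{a})\in\mathcal{S}$.
   Context: A Serre subcategory is a full subcategory closed under submodules, quotients and extensions. $(0:_M\mathfrak{a})=\{x\in M\mid \mathfrak{a}x=0\}$. *)

From HB Require Import structures.
From mathcomp Require Import all_boot all_order all_algebra.
Set Implicit Arguments. Unset Strict Implicit. Unset Printing Implicit Defensive.
Import GRing.Theory.
Local Open Scope ring_scope.

Definition is_ideal (R : comPzRingType) (a : R -> Prop) : Prop :=
  [/\ a 0, (forall x y, a x -> a y -> a (x + y)) & (forall r x, a x -> a (r * x))].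

Definition noetherian (R : comPzRingType) : Prop :=
  forall I : nat -> R -> Prop, (forall n, is_ideal (I n)) ->
    (forall n x, I n x -> I n.+1 x) ->
    exists N : nat, forall n x, (N <= n)%N -> I n x -> I N x.

Definition ideal_mul_mod (R : comPzRingType) (a : R -> Prop) (M : lmodType R) (x : M) : Prop :=
  exists s : seq (R * M), (forall p, p \in s -> a p.1) /\ x = \sum_(p <- s) p.1 *: p.2.

Definition annihilated (R : comPzRingType) (a : R -> Prop) (M : lmodType R) (x : M) : Prop :=
  forall r, a r -> r *: x = 0.

(* A Serre subcategory of R-Mod, given as a class of modules closed under
   submodules (injective linear maps), quotients (surjective linear maps)
   and extensions (short exact sequences). *)
Definition serre (R : comPzRingType) (S : lmodType R -> Prop) : Prop :=
  [/\ (forall (N M : lmodType R) (f : {linear N -> M}), injective f -> S M -> S N),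
      (forall (M N : lmodType R) (g : {linear M -> N}),
          (forall y, exists x, g x = y) -> S M -> S N) &
      (forall (N M L : lmodType R) (f : {linear N -> M}) (g : {linear M -> L}),
          injective f -> (forall y, exists x, g x = y) ->
          (forall m, g m = 0 <-> exists n, f n = m) ->
          S N -> S L -> S M)].

Definition submod_in (R : comPzRingType) (S : lmodType R -> Prop) (M : lmodType R)
    (P : M -> Prop) : Prop :=
  exists (N : lmodType R) (f : {linear N -> M}),
    [/\ injective f, (forall m, P m <-> exists n, f n = m) & S N].

Definition quotmod_in (R : comPzRingType) (S : lmodType R -> Prop) (M : lmodType R)
    (K : M -> Prop) : Prop :=
  exists (N : lmodType R) (g : {linear M -> N}),
    [/\ (forall y, exists x, g x = y), (forall m, g m = 0 <-> K m) & S N].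

From HB Require Import structures.
From mathcomp Require Import all_boot all_order all_algebra.
From mathcomp Require Import boolp.
Set Implicit Arguments. Unset Strict Implicit. Unset Printing Implicit Defensive.
Import GRing.Theory.
Local Open Scope ring_scope.

(** Since R is Noetherian, a is generated by finitely many elements r_1, ..., r_n,
    so that aM = r_1 M + ... + r_n M and (0 :_M a) is the intersection of the
    kernels of the multiplications by the r_i.  Induction on n then gives both
    directions, adding one generator r to a list s of generators at a time.  If aM
    is in S, then M/(0 :_M (r, s)) embeds, via m |-> (r m, m + (0 :_M s)), into
    rM x M/(0 :_M s), a submodule of aM x M/(0 :_M s).  If M/(0 :_M a) is in S,
    then (r, s)M is the image of M/(0 :_M a) x sM under (m, y) |-> r m + y, which
    is well defined because r kills (0 :_M a). *)

Section LinearConstructions.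
Variable R : comPzRingType.

Section Pairing.
Variables (A B C : lmodType R) (p : {linear A -> B}) (q : {linear A -> C}).

Definition lin_pair (x : A) : B * C := (p x, q x).

Lemma lin_pair_is_linear : linear lin_pair.
Proof. by move=> c u v; rewrite /lin_pair !linearP. Qed.

HB.instance Definition _ :=
  GRing.isLinear.Build R A (B * C)%type *:%R lin_pair lin_pair_is_linear.

End Pairing.

Section LinImage.
Variables (A B : lmodType R) (h : {linear A -> B}).

Definition lin_image_pred : pred B := fun y => `[< exists x, h x = y >].

Lemma image_pred_closed : subsemimod_closed lin_image_pred.
Proof.
split; first split.
- by apply/asboolP; exists 0; rewrite linear0.
- move=> _ _ /asboolP[x <-] /asboolP[y <-].
  by apply/asboolP; exists (x + y); rewrite linearD.
- by move=> c _ /asboolP[x <-]; apply/asboolP; exists (c *: x); rewrite linearZ.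
Qed.

HB.instance Definition _ :=
  GRing.isSubmodClosed.Build R B lin_image_pred image_pred_closed.

Record lin_image :=
  LinImage { lin_image_val :> B; lin_image_valP : lin_image_pred lin_image_val }.
HB.instance Definition _ := [isSub for lin_image_val].
HB.instance Definition _ := [Choice of lin_image by <:].
HB.instance Definition _ := [SubChoice_isSubLmodule of lin_image by <:].

Definition lin_image_corestr (x : A) : lin_image :=
  LinImage (asboolT (ex_intro _ x erefl)).

Lemma lin_image_corestr_is_linear : linear lin_image_corestr.
Proof. by move=> c u v; apply: val_inj; rewrite /= linearP. Qed.

HB.instance Definition _ :=
  GRing.isLinear.Build R A lin_image *:%R lin_image_corestr lin_image_corestr_is_linear.

Lemma lin_image_corestr_surj u : exists x, lin_image_corestr x = u.
Proof. by case: u => y Py; case/asboolP: (Py) => x hx; exists x; apply: val_inj. Qed.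

Lemma lin_image_corestr_eq0 x : lin_image_corestr x = 0 <-> h x = 0.
Proof. by split=> [hx0 | hx0]; [exact: (congr1 val hx0) | apply: val_inj]. Qed.

Lemma lin_image_val_range y : (exists u : lin_image, val u = y) <-> exists x, h x = y.
Proof.
split=> [[[z Pz] /= <-] | [x <-]]; last by exists (lin_image_corestr x).
by case/asboolP: Pz => x <-; exists x.
Qed.

End LinImage.

Section FactorInjective.
Variables (A B C : lmodType R) (f : {linear B -> C}) (k : {linear A -> C}).
Hypotheses (f_inj : injective f) (k_range : forall x, exists y, f y = k x).

Definition factor_inj (x : A) : B := sval (cid (k_range x)).

Lemma factor_injK x : f (factor_inj x) = k x.
Proof. exact: svalP (cid (k_range x)). Qed.

Lemma factor_inj_is_linear : linear factor_inj.
Proof. by move=> c u v; apply: f_inj; rewrite linearP !factor_injK linearP. Qed.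

HB.instance Definition _ :=
  GRing.isLinear.Build R A B *:%R factor_inj factor_inj_is_linear.

Lemma linear_factor_inj : exists g : {linear A -> B}, forall x, f (g x) = k x.
Proof. by exists factor_inj; exact: factor_injK. Qed.

End FactorInjective.

Section FactorSurjective.
Variables (A B C : lmodType R) (g : {linear A -> B}) (k : {linear A -> C}).
Hypotheses (g_surj : forall y, exists x, g x = y)
  (g_ker : forall x, g x = 0 -> k x = 0).

Definition factor_surj (y : B) : C := k (sval (cid (g_surj y))).

Lemma factor_surjK x : factor_surj (g x) = k x.
Proof.
rewrite /factor_surj; case: cid => x' /= gx'; apply/eqP; rewrite -subr_eq0 -linearB.
by apply/eqP/g_ker; rewrite linearB gx' subrr.
Qed.

Lemma factor_surj_is_linear : linear factor_surj.
Proof.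
move=> c u v; have [x <-] := g_surj u; have [y <-] := g_surj v.
by rewrite -linearP !factor_surjK linearP.
Qed.

HB.instance Definition _ :=
  GRing.isLinear.Build R B C *:%R factor_surj factor_surj_is_linear.

Lemma linear_factor_surj : exists h : {linear B -> C}, forall x, h (g x) = k x.
Proof. by exists factor_surj; exact: factor_surjK. Qed.

End FactorSurjective.

End LinearConstructions.

Section SerreClass.
Variables (R : comPzRingType) (S : lmodType R -> Prop).

Lemma submod_in_ext (M : lmodType R) (P Q : M -> Prop) :
  (forall m, P m <-> Q m) -> submod_in S P -> submod_in S Q.
Proof.
move=> PQ [N [f [f_inj f_range SN]]]; exists N, f; split=> // m.
by rewrite -PQ.
Qed.

Lemma quotmod_in_ext (M : lmodType R) (K L : M -> Prop) :
  (forall m, K m <-> L m) -> quotmod_in S K -> quotmod_in S L.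
Proof.
move=> KL [N [g [g_surj g_ker SN]]]; exists N, g; split=> // m.
by rewrite -KL.
Qed.

Hypothesis serreS : serre S.

Lemma serre_prod (A B : lmodType R) : S A -> S B -> S (A * B)%type.
Proof.
case: serreS => _ _ ext SA SB.
apply: (ext _ _ _ (lin_pair idfun \0) snd) => //.
- by move=> x y [].
- by move=> y; exists (0, y).
- by move=> [x y]; split=> [/= -> | [n [_ <-]]]; first exists x.
Qed.

Lemma serre_lin_image_sub (A B : lmodType R) (h : {linear A -> B}) :
  S B -> S (lin_image h).
Proof. by case: serreS => sub _ _; apply: (sub _ _ val); exact: val_inj. Qed.

Lemma serre_lin_image_quo (A B : lmodType R) (h : {linear A -> B}) :
  S A -> S (lin_image h).
Proof.
case: serreS => _ quo _; apply: (quo _ _ (lin_image_corestr h)).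
exact: lin_image_corestr_surj.
Qed.

Lemma submod_in_zero {M N : lmodType R} : S N -> submod_in S (fun m : M => m = 0).
Proof.
move=> SN; exists (lin_image (\0 : {linear N -> M})), val; split.
- exact: val_inj.
- by move=> m; rewrite lin_image_val_range; split=> [-> | [x <-]]; first exists 0.
- exact: serre_lin_image_quo.
Qed.

Lemma quotmod_in_total {M N : lmodType R} : S N -> quotmod_in S (fun _ : M => True).
Proof.
move=> SN; exists (lin_image (\0 : {linear M -> N})), (lin_image_corestr _); split.
- exact: lin_image_corestr_surj.
- by move=> m; rewrite lin_image_corestr_eq0.
- exact: serre_lin_image_sub.
Qed.

Lemma quotmod_in_kerI (M M' : lmodType R) (phi : {linear M -> M'})
    (P : M' -> Prop) (K : M -> Prop) :
  (forall x, P (phi x)) -> submod_in S P -> quotmod_in S K ->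
  quotmod_in S (fun m => phi m = 0 /\ K m).
Proof.
move=> phiP [N0 [f [f_inj f_range SN0]]] [N1 [g [g_surj g_ker SN1]]].
have [phi' phi'K] := linear_factor_inj f_inj (fun x => (f_range _).1 (phiP x)).
exists (lin_image (lin_pair phi' g)), (lin_image_corestr _); split.
- exact: lin_image_corestr_surj.
- move=> m; rewrite lin_image_corestr_eq0 -g_ker -phi'K /lin_pair.
  change ((phi' m, g m) = (0, 0) <-> f (phi' m) = 0 /\ g m = 0).
  split=> [[-> ->] | [phi0 ->]]; first by rewrite linear0.
  by have -> : phi' m = 0 by apply: f_inj; rewrite phi0 linear0.
- exact/serre_lin_image_sub/serre_prod.
Qed.

Lemma submod_in_add_image (M M' : lmodType R) (phi : {linear M -> M'})
    (K : M -> Prop) (P : M' -> Prop) :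
  (forall x, K x -> phi x = 0) -> quotmod_in S K -> submod_in S P ->
  submod_in S (fun m => exists x y, P y /\ m = phi x + y).
Proof.
move=> Kphi [N1 [g [g_surj g_ker SN1]]] [N0 [f [f_inj f_range SN0]]].
have [phi' phi'K] :=
  linear_factor_surj g_surj (fun x gx0 => Kphi x ((g_ker x).1 gx0)).
exists (lin_image ((phi' \o fst) \+ (f \o snd))), val; split.
- exact: val_inj.
- move=> m; rewrite lin_image_val_range; split.
    by case=> x [_ [/f_range[z <-] ->]]; exists (g x, z); rewrite /= phi'K.
  case=> -[u z] <-; have [x <-] := g_surj u; exists x, (f z).
  by split; [apply/f_range; exists z | rewrite /= phi'K].
- exact/serre_lin_image_quo/serre_prod.
Qed.

End SerreClass.

Section GeneratedSubmodule.
Variables (R : comPzRingType) (M : lmodType R).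

Fixpoint gen_mul_mod (s : seq R) (m : M) : Prop :=
  if s is r :: s' then exists x y, gen_mul_mod s' y /\ m = r *: x + y else m = 0.

Lemma gen_mul_mod0 s : gen_mul_mod s 0.
Proof. by elim: s => [|r s IH] //=; exists 0, 0; rewrite scaler0 addr0. Qed.

Lemma gen_mul_modD s x y : gen_mul_mod s x -> gen_mul_mod s y -> gen_mul_mod s (x + y).
Proof.
elim: s x y => [|r s IH] x y /=; first by move=> -> ->; rewrite addr0.
move=> [u [x' [gx' ->]]] [v [y' [gy' ->]]]; exists (u + v), (x' + y').
by split; [exact: IH | rewrite scalerDr addrACA].
Qed.

Lemma gen_mul_modZ s c x : gen_mul_mod s x -> gen_mul_mod s (c *: x).
Proof.
elim: s x => [|r s IH] x /=; first by move=> ->; rewrite scaler0.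
move=> [u [x' [gx' ->]]]; exists (c *: u), (c *: x').
by split; [exact: IH | rewrite scalerDr !scalerA mulrC].
Qed.

Lemma gen_mul_mod_cons r s m : gen_mul_mod s m -> gen_mul_mod (r :: s) m.
Proof. by move=> gm; exists 0, m; rewrite scaler0 add0r. Qed.

Lemma gen_mul_mod_head r s x : gen_mul_mod (r :: s) (r *: x).
Proof. by exists x, 0; rewrite addr0; split; first exact: gen_mul_mod0. Qed.

End GeneratedSubmodule.

Definition ideal_gen (R : comPzRingType) (s : seq R) : R -> Prop :=
  @gen_mul_mod R R^o s.

Lemma ideal_gen_is_ideal (R : comPzRingType) (s : seq R) : is_ideal (ideal_gen s).
Proof.
split; [exact: (@gen_mul_mod0 _ R^o) | exact: (@gen_mul_modD _ R^o)
       | exact: (@gen_mul_modZ _ R^o)].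
Qed.

Lemma gen_mul_mod_scale (R : comPzRingType) (M : lmodType R) (s : seq R) c (v : M) :
  ideal_gen s c -> gen_mul_mod s (c *: v).
Proof.
rewrite /ideal_gen; elim: s c => [|r s IH] c /=; first by move=> ->; rewrite scale0r.
move=> [d [c' [gc' ->]]]; exists (d *: v), (c' *: v).
by split; [exact: IH | rewrite scalerDl scalerA].
Qed.

Lemma noetherian_fg (R : comPzRingType) (a : R -> Prop) : noetherian R ->
  exists s : seq R, (forall r, r \in s -> a r) /\ (forall r, a r -> ideal_gen s r).
Proof.
move=> noethR; apply: contrapT => no_fg.
have next s : {x | (forall r, r \in s -> a r) -> a x /\ ~ ideal_gen s x}.
  apply: cid; have [sA|] := pselect (forall r, r \in s -> a r); last by exists 0.
  have /existsNP[x /not_implyP[ax not_gen]] : ~ (forall r, a r -> ideal_gen s r).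
    by move=> gen; apply: no_fg; exists s.
  by exists x.
pose fix chain n := if n is n'.+1 then sval (next (chain n')) :: chain n' else [::].
have chainA n r : r \in chain n -> a r.
  elim: n r => [|n IH] r //=; rewrite inE => /predU1P[-> | /IH //].
  exact: (svalP (next _) IH).1.
have [N stable] := noethR (fun n => ideal_gen (chain n)) (fun n => ideal_gen_is_ideal _)
  (fun n x => @gen_mul_mod_cons _ R^o _ _ x).
have [_ not_gen] := svalP (next (chain N)) (chainA N).
apply/not_gen/(stable N.+1) => //.
by rewrite -[X in ideal_gen _ X]mulr1; exact: gen_mul_mod_head.
Qed.

Section FinitelyGenerated.
Variables (R : comPzRingType) (M : lmodType R) (a : R -> Prop).

Lemma gen_mul_mod_ideal_mul_mod (s : seq R) (m : M) :
  (forall r, r \in s -> a r) -> gen_mul_mod s m -> ideal_mul_mod a m.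
Proof.
elim: s m => [|r s IH] m sA /=; first by move=> ->; exists [::]; rewrite big_nil.
move=> [x [y [gy ->]]].
have [|l [lA ->]] := IH y _ gy; first by move=> q qs; apply: sA; rewrite inE qs orbT.
exists ((r, x) :: l); split; last by rewrite big_cons.
by move=> p; rewrite inE => /predU1P[-> | /lA //]; apply: sA; exact: mem_head.
Qed.

Lemma ideal_mul_mod_gen_mul_mod (s : seq R) (m : M) :
  (forall r, a r -> ideal_gen s r) -> ideal_mul_mod a m -> gen_mul_mod s m.
Proof.
move=> aS [l [lA ->]]; elim: l lA => [|[r v] l IH] lA.
  by rewrite big_nil; exact: gen_mul_mod0.
rewrite big_cons; apply: gen_mul_modD.
  by apply/gen_mul_mod_scale/aS; exact: (lA _ (mem_head _ _)).
by apply: IH => p pl; apply: lA; rewrite inE pl orbT.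
Qed.

Lemma annihilated_ideal_gen (s : seq R) (m : M) c :
  annihilated (fun r => r \in s) m -> ideal_gen s c -> c *: m = 0.
Proof.
rewrite /ideal_gen; elim: s c => [|r s IH] c ann /=.
  by move=> ->; rewrite scale0r.
move=> [d [c' [gc' ->]]].
have -> : (r *: d + c') *: m = d *: (r *: m) + c' *: m.
  by rewrite scalerDl scalerA mulrC.
rewrite ann ?mem_head // scaler0 add0r.
by apply: IH gc' => q qs; apply: ann; rewrite inE qs orbT.
Qed.

Lemma annihilated_cons r (s : seq R) (m : M) :
  annihilated (fun q => q \in r :: s) m <->
  r *: m = 0 /\ annihilated (fun q => q \in s) m.
Proof.
split=> [ann | [rm ann] q]; last by rewrite inE => /predU1P[-> // | /ann].
by split=> [|q qs]; apply: ann; rewrite ?mem_head // inE qs orbT.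
Qed.

End FinitelyGenerated.

Section SerreInduction.
Variables (R : comPzRingType) (S : lmodType R -> Prop) (M : lmodType R) (a : R -> Prop).
Hypothesis serreS : serre S.

Lemma quotmod_in_annihilated_seq (s : seq R) :
  submod_in S (ideal_mul_mod a (M:=M)) -> (forall r, r \in s -> a r) ->
  quotmod_in S (annihilated (fun r => r \in s) (M:=M)).
Proof.
move=> aMS; have [N [_ [_ _ SN]]] := aMS.
elim: s => [|r s IH] sA.
  by apply: quotmod_in_ext (quotmod_in_total serreS SN) => m; split=> // _ r.
have rA : a r by apply: sA; exact: mem_head.
have sA' q : q \in s -> a q by move=> qs; apply: sA; rewrite inE qs orbT.
apply: quotmod_in_ext (quotmod_in_kerI serreS (phi := *:%R r) _ aMS (IH sA')).
  by move=> m; rewrite annihilated_cons.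
by move=> x; exists [:: (r, x)]; split=> [p /[!inE] /eqP -> // |]; rewrite big_seq1.
Qed.

Lemma submod_in_gen_mul_mod (s : seq R) :
  quotmod_in S (annihilated a (M:=M)) -> (forall r, r \in s -> a r) ->
  submod_in S (gen_mul_mod s (M:=M)).
Proof.
move=> annS; have [N [_ [_ _ SN]]] := annS.
elim: s => [|r s IH] sA; first exact: submod_in_zero SN.
have sA' q : q \in s -> a q by move=> qs; apply: sA; rewrite inE qs orbT.
apply: (submod_in_add_image serreS (phi := *:%R r) _ annS (IH sA')).
by move=> x ann; apply: ann; apply: sA; exact: mem_head.
Qed.

End SerreInduction.

Theorem lemma2p1 (R : comPzRingType) (a : R -> Prop) (M : lmodType R)
    (S : lmodType R -> Prop) :
  noetherian R -> is_ideal a -> serre S ->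
  (submod_in S (ideal_mul_mod a (M:=M)) <-> quotmod_in S (annihilated a (M:=M))).
Proof.
move=> noethR _ serreS; have [s [sA aS]] := noetherian_fg a noethR.
split=> [aMS | annS].
- apply: quotmod_in_ext (quotmod_in_annihilated_seq serreS aMS sA) => m.
  split=> [ann r ar | ann r rs]; last exact: ann (sA r rs).
  exact: annihilated_ideal_gen ann (aS r ar).
- apply: submod_in_ext (submod_in_gen_mul_mod serreS annS sA) => m.
  split; [exact: gen_mul_mod_ideal_mul_mod | exact: ideal_mul_mod_gen_mul_mod].
Qed.
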